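(* $$\sum_{n=1}^\infty \frac{H_n \binom{2n}{n}}{(n+1)^2\, 2^{2n}} = -\frac{\pi^2}{3} - 4(\log 2)^2 + 8\log 2.$$
   Context: $H_n=\sum_{k=1}^n \frac{1}{k}$ denotes the $n$-th harmonic number and $\binom{2n}{n}$ the central binomial coefficient; $\log$ is the natural logarithm. *)

From Stdlib Require Import Reals.
From Coquelicot Require Import Coquelicot.
Open Scope R_scope.

Fixpoint harmonic (n : nat) : R :=
  match n with
  | O => 0
  | S m => harmonic m + / INR (S m)
  end.

Definition central_binom (n : nat) : R := Binomial.C (2 * n) n.

Definition term (n : nat) : R :=
  harmonic n * central_binom n / ((INR n + 1) ^ 2 * 2 ^ (2 * n)).

(* Write c_n = C(2n, n) / 4^n, so that the summand is c_n H_n / (n + 1)^2.  The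
   substitution z = 4t / (1 + t)^2 turns sqrt (1 - z) into (1 - t) / (1 + t), hence
   sum c_n z^n = (1 - z)^(-1/2) into (1 + t) / (1 - t).  Solving, in the variable t,
   the first-order differential equations satisfied by the power series with
   coefficients c_n / n, c_n / n^2, c_n H_n and c_n H_n / n gives
   2 log (1 + t), 2 Li2 t - Li2 (t^2) - 2 log^2 (1 + t), -2 log (1 - t) (1 + t) / (1 - t)
   and 2 Li2 t.  All coefficients are nonnegative, so Abel's theorem and its Tauberian
   converse apply as t -> 1; with Li2 1 = PI^2/6 (Matsuoka's Wallis-integral proof of
   the Basel problem) this gives sum c_n / n = 2 log 2,
   sum c_n / n^2 = PI^2/6 - 2 log^2 2 and sum c_n H_n / n = PI^2/3.  Finally
   c_n H_n / (n + 1)^2 = 2 c_n / n^2 - 2 c_n H_n / n + 4 c_n / n + D_(n-1) - D_n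
   with D_n = c_n H_n (2n + 1) (2n + 3) / (n + 1)^2, and D_n -> 0 because
   c_m H_m <= 4 sum_(m < k <= 2m) c_k H_k / k is a tail of a convergent series. *)

From Stdlib Require Import Reals Lra Lia.
From Coquelicot Require Import Coquelicot.
Open Scope R_scope.

Lemma eq_of_is_derive (f g df dg : R -> R) v : 0 <= v -> f 0 = g 0 ->
  (forall t, 0 <= t <= v -> is_derive f t (df t)) ->
  (forall t, 0 <= t <= v -> is_derive g t (dg t)) ->
  (forall t, 0 <= t <= v -> df t = dg t) -> f v = g v.
Proof.
  intros Hv H0 Hf Hg Hfg. destruct (Req_dec v 0) as [->|Hv0]; [exact H0|].
  enough (f 0 - g 0 = f v - g v) by lra.
  apply (eq_is_derive (fun t => f t - g t)); [|lra].
  intros t Ht. replace (@zero R_NormedModule) with (df t - dg t)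
    by (rewrite (Hfg t Ht); apply Rminus_diag_eq; reflexivity).
  apply (is_derive_minus f g); auto.
Qed.

Lemma is_series_of_partial_sums (a : nat -> R) (l : R) :
  is_lim_seq (sum_f_R0 a) l -> is_series a l.
Proof.
  intros H. apply (is_lim_seq_ext _ (sum_n a)) in H; [exact H|].
  intros n. now rewrite sum_n_Reals.
Qed.

Lemma is_lim_seq_partial_sums (a : nat -> R) (l : R) :
  is_series a l -> is_lim_seq (sum_f_R0 a) l.
Proof.
  intros H. apply (is_lim_seq_ext (sum_n a)); [|exact H].
  intros n. now rewrite sum_n_Reals.
Qed.

(* Coquelicot's is_series_plus and is_series_scal, in a form that unifies with Rplus
   and Rmult. *)
Lemma is_series_plus_R (a b : nat -> R) (la lb : R) :
  is_series a la -> is_series b lb -> is_series (fun n => a n + b n) (la + lb).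
Proof. exact (is_series_plus a b la lb). Qed.

Lemma is_series_scal_R (c : R) (a : nat -> R) (l : R) :
  is_series a l -> is_series (fun n => c * a n) (c * l).
Proof. exact (is_series_scal c a l). Qed.

Lemma is_series_telescope (d : nat -> R) :
  is_lim_seq d 0 -> is_series (fun n => d n - d (S n)) (d O).
Proof.
  intros Hd. apply is_series_of_partial_sums.
  apply (is_lim_seq_ext (fun n => d O - d (S n))).
  - induction n as [|n IH]; simpl; rewrite <- ?IH; ring.
  - apply (is_lim_seq_incr_1 d 0) in Hd.
    pose proof (is_lim_seq_minus' _ _ _ _ (is_lim_seq_const (d O)) Hd) as H.
    now rewrite Rminus_0_r in H.
Qed.

Lemma is_lim_seq_pow (x : nat -> R) k :
  is_lim_seq x 1 -> is_lim_seq (fun m => x m ^ k) 1.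
Proof.
  intros Hx. induction k as [|k IH]; simpl.
  - apply is_lim_seq_const.
  - rewrite <- (Rmult_1_l 1). now apply is_lim_seq_mult'.
Qed.

Lemma is_lim_seq_sum_pow (a x : nat -> R) N : is_lim_seq x 1 ->
  is_lim_seq (fun m => sum_f_R0 (fun k => a k * x m ^ k) N) (sum_f_R0 a N).
Proof.
  intros Hx. induction N as [|N IH]; simpl.
  - apply (is_lim_seq_ext (fun _ => a O)); [intros; ring | apply is_lim_seq_const].
  - apply is_lim_seq_plus'; [exact IH|].
    pose proof (is_lim_seq_mult' _ _ _ _ (is_lim_seq_const (a (S N)))
                  (is_lim_seq_pow x (S N) Hx)) as H.
    now rewrite Rmult_1_r in H.
Qed.

Lemma inv_INR_S_range n : 0 < / (INR n + 1) <= 1.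
Proof.
  pose proof (pos_INR n). split; [apply Rinv_0_lt_compat; lra|].
  rewrite <- Rinv_1. apply Rinv_le_contravar; lra.
Qed.

Lemma is_lim_seq_inv_INR_S : is_lim_seq (fun n => / (INR n + 1)) 0.
Proof.
  apply (is_lim_seq_inv (fun n => INR n + 1) p_infty); [|discriminate].
  apply (is_lim_seq_ext (fun n => INR (S n))); [intros n; apply S_INR|].
  apply (is_lim_seq_incr_1 INR p_infty), is_lim_seq_INR.
Qed.

Lemma Rabs_lt_1 t : 0 <= t < 1 -> Rabs t < 1.
Proof. intros Ht. rewrite Rabs_pos_eq; lra. Qed.

Section NonnegativeCoefficients.

Variables (a x : nat -> R).
Hypothesis a_ge0 : forall n, 0 <= a n.
Hypothesis x_range : forall m, 0 <= x m < 1.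
Hypothesis x_lim : is_lim_seq x 1.

Let pow_x_le1 m k : 0 <= x m ^ k <= 1.
Proof.
  split; [apply pow_le, x_range|].
  rewrite <- (pow1 k). apply pow_incr. pose proof (x_range m). lra.
Qed.

Let term_range m k : 0 <= a k * x m ^ k <= a k.
Proof.
  pose proof (a_ge0 k). pose proof (pow_x_le1 m k). split; nra.
Qed.

Let sum_le_PSeries m N : ex_series (fun k => a k * x m ^ k) ->
  sum_f_R0 (fun k => a k * x m ^ k) N <= PSeries a (x m).
Proof.
  intros Hex. set (b k := a k * x m ^ k).
  assert (Hb : is_series b (PSeries a (x m))) by exact (Series_correct _ Hex).
  apply is_lim_seq_partial_sums in Hb.
  apply (is_lim_seq_le (fun _ => sum_f_R0 b N) (fun n => sum_f_R0 b (n + N))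
           (sum_f_R0 b N) (PSeries a (x m))).
  - intros n. induction n as [|n IH]; simpl; [lra|].
    pose proof (term_range m (S (n + N))). unfold b in *. lra.
  - apply is_lim_seq_const.
  - now apply (is_lim_seq_incr_n (sum_f_R0 b) N).
Qed.

Lemma abel_nonneg (A : R) : is_series a A -> is_lim_seq (fun m => PSeries a (x m)) A.
Proof.
  intros HA.
  assert (Hex : forall m, ex_series (fun k => a k * x m ^ k)).
  { intros m. apply (@ex_series_le R_AbsRing R_CompleteNormedModule _ a); [|now exists A].
    intros k. unfold norm; simpl. rewrite Rabs_pos_eq; apply term_range. }
  assert (Hup : forall m, PSeries a (x m) <= A).
  { intros m. rewrite <- (is_series_unique a A HA). apply Series_le; [apply term_range|].
    now exists A. }
  apply is_lim_seq_spec. intros eps.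
  apply is_lim_seq_partial_sums, is_lim_seq_spec in HA.
  destruct (HA (pos_div_2 eps)) as [N HN]. specialize (HN N (le_n N)).
  pose proof (is_lim_seq_sum_pow a x N x_lim) as HP. apply is_lim_seq_spec in HP.
  destruct (HP (pos_div_2 eps)) as [M HM].
  exists M. intros m Hm. specialize (HM m Hm).
  pose proof (sum_le_PSeries m N (Hex m)). specialize (Hup m).
  simpl in *. apply Rabs_def1; apply Rabs_def2 in HN; apply Rabs_def2 in HM; lra.
Qed.

Lemma tauber_nonneg (L : R) : (forall m, ex_series (fun k => a k * x m ^ k)) ->
  is_lim_seq (fun m => PSeries a (x m)) L -> is_series a L.
Proof.
  intros Hex HL.
  assert (Hbound : forall N, sum_f_R0 a N <= L).
  { intros N. apply (is_lim_seq_le _ _ _ _ (fun m => sum_le_PSeries m N (Hex m))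
                       (is_lim_seq_sum_pow a x N x_lim) HL). }
  assert (Hincr : forall N, sum_f_R0 a N <= sum_f_R0 a (S N)).
  { intros N. rewrite tech5. pose proof (a_ge0 (S N)). lra. }
  destruct (ex_finite_lim_seq_incr _ L Hincr Hbound) as [A HA].
  apply is_series_of_partial_sums in HA.
  replace L with A; [exact HA|].
  apply Rbar_finite_eq. rewrite <- (is_lim_seq_unique _ _ HL).
  symmetry. now apply is_lim_seq_unique, abel_nonneg.
Qed.

End NonnegativeCoefficients.

Lemma CV_radius_ge_1 (a : nat -> R) M :
  (forall n, Rabs (a n) <= M) -> Rbar_le 1 (CV_radius a).
Proof.
  intros HM. apply (proj1 (CV_radius_bounded a)). exists M.
  intros n. now rewrite pow1, Rmult_1_r.
Qed.

Lemma CV_radius_ge_1_unit_interval (a : nat -> R) :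
  (forall n, 0 <= a n <= 1) -> Rbar_le 1 (CV_radius a).
Proof.
  intros Ha. apply (CV_radius_ge_1 a 1). intros n.
  specialize (Ha n). rewrite Rabs_pos_eq; lra.
Qed.

Lemma Rabs_lt_CV_radius (a : nat -> R) x :
  Rbar_le 1 (CV_radius a) -> Rabs x < 1 -> Rbar_lt (Rabs x) (CV_radius a).
Proof. intros Ha Hx. destruct (CV_radius a); simpl in *; lra. Qed.

Lemma CV_radius_ge_1_scal (c : R) (a : nat -> R) :
  Rbar_le 1 (CV_radius a) -> Rbar_le 1 (CV_radius (fun n => c * a n)).
Proof.
  intros Ha. destruct (Req_dec c 0) as [->|Hc].
  - apply (CV_radius_ge_1 _ 0). intros n. rewrite Rmult_0_l, Rabs_R0. lra.
  - change (fun n => c * a n) with (PS_scal c a). now rewrite CV_radius_scal.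
Qed.

Lemma CV_radius_ge_1_plus (a b : nat -> R) :
  Rbar_le 1 (CV_radius a) -> Rbar_le 1 (CV_radius b) ->
  Rbar_le 1 (CV_radius (fun n => a n + b n)).
Proof.
  intros Ha Hb. apply (Rbar_le_trans _ _ _ (Rbar_min_case _ _ (Rbar_le 1) Ha Hb)).
  apply (CV_radius_plus a b).
Qed.

Lemma CV_radius_mul_INR (a : nat -> R) :
  CV_radius (fun n => INR n * a n) = CV_radius a.
Proof.
  rewrite <- (CV_radius_derive a), <- (CV_radius_incr_1 (PS_derive a)).
  apply CV_radius_ext.
  intros [|n]; simpl; [apply Rmult_0_l | reflexivity].
Qed.

Lemma PS_derive_div_INR (a : nat -> R) n : PS_derive (fun n => a n / INR n) n = a (S n).
Proof. unfold PS_derive. rewrite S_INR. field. pose proof (pos_INR n). lra. Qed.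

Lemma CV_radius_div_INR (a : nat -> R) : CV_radius (fun n => a n / INR n) = CV_radius a.
Proof.
  rewrite <- CV_radius_derive, <- (CV_radius_decr_1 a).
  apply CV_radius_ext, PS_derive_div_INR.
Qed.

Lemma PSeries_mul_INR (a : nat -> R) x :
  PSeries (fun n => INR n * a n) x = x * PSeries (PS_derive a) x.
Proof.
  rewrite <- PSeries_incr_1. apply PSeries_ext.
  intros [|n]; simpl; [apply Rmult_0_l | reflexivity].
Qed.

Lemma PSeries_plus_disc (a b : nat -> R) x :
  Rbar_le 1 (CV_radius a) -> Rbar_le 1 (CV_radius b) -> Rabs x < 1 ->
  PSeries (fun n => a n + b n) x = PSeries a x + PSeries b x.
Proof.
  intros Ha Hb Hx.
  apply PSeries_plus; apply CV_radius_inside, Rabs_lt_CV_radius; assumption.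
Qed.

Lemma ex_series_disc (a : nat -> R) x :
  Rbar_le 1 (CV_radius a) -> Rabs x < 1 -> ex_series (fun k => a k * x ^ k).
Proof.
  intros Ha Hx. apply ex_series_Rabs, CV_disk_inside, Rabs_lt_CV_radius; assumption.
Qed.

Lemma PSeries_decr_1_disc (a : nat -> R) x :
  Rbar_le 1 (CV_radius a) -> Rabs x < 1 ->
  x * PSeries (fun n => a (S n)) x = PSeries a x - a O.
Proof.
  intros Ha Hx.
  rewrite (PSeries_decr_1 a x) by (apply CV_radius_inside, Rabs_lt_CV_radius; assumption).
  unfold PS_decr_1. ring.
Qed.

Lemma PSeries_one x : Rabs x < 1 -> PSeries (fun _ => 1) x = / (1 - x).
Proof.
  intros Hx. apply is_series_unique.
  apply (is_series_ext (fun n => x ^ n)); [intros n; simpl; ring | now apply is_series_geom].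
Qed.

Lemma PSeries_derive_first_order (a b : nat -> R) x :
  Rbar_le 1 (CV_radius a) -> Rbar_le 1 (CV_radius b) -> Rabs x < 1 ->
  (forall n, 2 * PS_derive a n = (2 * INR n + 1) * a n + b n) ->
  2 * (1 - x) * PSeries (PS_derive a) x = PSeries a x + PSeries b x.
Proof.
  intros Ha Hb Hx Hab.
  assert (Hmul : Rbar_le 1 (CV_radius (fun n => INR n * a n))) by now rewrite CV_radius_mul_INR.
  assert (HD : PSeries (PS_derive a) x
                = x * PSeries (PS_derive a) x + / 2 * PSeries a x + / 2 * PSeries b x).
  { rewrite (PSeries_ext _ (fun n => (INR n * a n + / 2 * a n) + / 2 * b n)) at 1
      by (intros n; apply (Rmult_eq_reg_l 2); [rewrite Hab; field | lra]).
    rewrite !PSeries_plus_disc by auto using CV_radius_ge_1_scal, CV_radius_ge_1_plus.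
    rewrite PSeries_mul_INR.
    change (fun n => / 2 * a n) with (PS_scal (/ 2) a).
    change (fun n => / 2 * b n) with (PS_scal (/ 2) b).
    now rewrite !PSeries_scal. }
  lra.
Qed.

Lemma is_RInt_derive_everywhere (f df : R -> R) a b :
  (forall x, is_derive f x (df x)) -> (forall x, ex_derive df x) ->
  is_RInt df a b (f b - f a).
Proof.
  intros Hf Hdf. apply (is_RInt_derive f df); auto.
  intros x _. apply (@ex_derive_continuous R_AbsRing R_NormedModule), Hdf.
Qed.

Lemma sin2_cos2_pow (x : R) : sin x ^ 2 + cos x ^ 2 = 1.
Proof. rewrite <- (sin2_cos2 x). unfold Rsqr. ring. Qed.

Definition wallis_cos (n : nat) : R := RInt (fun x => cos x ^ (2 * n)) 0 (PI / 2).
Definition wallis_sqr (n : nat) : R := RInt (fun x => x ^ 2 * cos x ^ (2 * n)) 0 (PI / 2).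

Lemma is_RInt_wallis_cos n : is_RInt (fun x => cos x ^ (2 * n)) 0 (PI / 2) (wallis_cos n).
Proof.
  apply (RInt_correct (V := R_CompleteNormedModule)), ex_RInt_continuous.
  intros x _. apply (@ex_derive_continuous R_AbsRing R_NormedModule). auto_derive. trivial.
Qed.

Lemma is_RInt_wallis_sqr n :
  is_RInt (fun x => x ^ 2 * cos x ^ (2 * n)) 0 (PI / 2) (wallis_sqr n).
Proof.
  apply (RInt_correct (V := R_CompleteNormedModule)), ex_RInt_continuous.
  intros x _. apply (@ex_derive_continuous R_AbsRing R_NormedModule). auto_derive. trivial.
Qed.

Lemma is_derive_sin_cos_pow n (x : R) :
  is_derive (fun x => sin x * cos x ^ (2 * n + 1)) x
    ((2 * INR n + 2) * cos x ^ (2 * S n) - (2 * INR n + 1) * cos x ^ (2 * n)).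
Proof.
  auto_derive; [trivial|].
  replace (n + (n + 0))%nat with (2 * n)%nat by lia.
  replace (Init.Nat.pred (2 * n + 1)) with (2 * n)%nat by lia.
  replace (2 * S n)%nat with (2 * n + 1 + 1)%nat by lia.
  rewrite !pow_add, plus_INR, mult_INR. simpl INR.
  set (K := cos x ^ (2 * n)). apply Rminus_diag_uniq.
  transitivity ((2 * INR n + 1) * K * (1 - (sin x ^ 2 + cos x ^ 2))); [ring|].
  rewrite sin2_cos2_pow. ring.
Qed.

Lemma is_derive_matsuoka n (x : R) :
  is_derive
    (fun x => x * cos x ^ (2 * n + 2) + (INR n + 1) * (x ^ 2 * (sin x * cos x ^ (2 * n + 1)))) x
    (cos x ^ (2 * S n) + (INR n + 1) * (2 * INR n + 2) * (x ^ 2 * cos x ^ (2 * S n))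
     - (INR n + 1) * (2 * INR n + 1) * (x ^ 2 * cos x ^ (2 * n))).
Proof.
  auto_derive; [trivial|].
  replace (n + (n + 0))%nat with (2 * n)%nat by lia.
  replace (Init.Nat.pred (2 * n + 1)) with (2 * n)%nat by lia.
  replace (Init.Nat.pred (2 * n + 2)) with (2 * n + 1)%nat by lia.
  replace (2 * S n)%nat with (2 * n + 1 + 1)%nat by lia.
  replace (2 * n + 2)%nat with (2 * n + 1 + 1)%nat by lia.
  rewrite !pow_add, !plus_INR, mult_INR. simpl INR.
  set (K := cos x ^ (2 * n)). apply Rminus_diag_uniq.
  transitivity ((INR n + 1) * x ^ 2 * (2 * INR n + 1) * K * (1 - (sin x ^ 2 + cos x ^ 2)));
    [ring|].
  rewrite sin2_cos2_pow. ring.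
Qed.

Lemma wallis_cos_S n :
  (2 * INR n + 2) * wallis_cos (S n) = (2 * INR n + 1) * wallis_cos n.
Proof.
  assert (Hder := is_RInt_derive_everywhere _ _ 0 (PI / 2) (is_derive_sin_cos_pow n)
                    ltac:(intros x; auto_derive; trivial)).
  assert (Hcomb : is_RInt
    (fun x => (2 * INR n + 2) * cos x ^ (2 * S n) - (2 * INR n + 1) * cos x ^ (2 * n)) 0 (PI / 2)
    ((2 * INR n + 2) * wallis_cos (S n) - (2 * INR n + 1) * wallis_cos n)).
  { apply (@is_RInt_minus R_NormedModule); apply (@is_RInt_scal R_NormedModule).
    - exact (is_RInt_wallis_cos (S n)).
    - exact (is_RInt_wallis_cos n). }
  pose proof (is_RInt_unique _ _ _ _ Hder) as E1.
  pose proof (is_RInt_unique _ _ _ _ Hcomb) as E2.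
  cbv beta in E1. rewrite cos_PI2, sin_0, pow_i in E1 by lia. lra.
Qed.

Lemma wallis_sqr_S n :
  wallis_cos (S n) = (INR n + 1) * (2 * INR n + 1) * wallis_sqr n
                     - (INR n + 1) * (2 * INR n + 2) * wallis_sqr (S n).
Proof.
  assert (Hder := is_RInt_derive_everywhere _ _ 0 (PI / 2) (is_derive_matsuoka n)
                    ltac:(intros x; auto_derive; trivial)).
  assert (Hcomb : is_RInt
    (fun x => cos x ^ (2 * S n) + (INR n + 1) * (2 * INR n + 2) * (x ^ 2 * cos x ^ (2 * S n))
              - (INR n + 1) * (2 * INR n + 1) * (x ^ 2 * cos x ^ (2 * n))) 0 (PI / 2)
    (wallis_cos (S n) + (INR n + 1) * (2 * INR n + 2) * wallis_sqr (S n)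
     - (INR n + 1) * (2 * INR n + 1) * wallis_sqr n)).
  { apply (@is_RInt_minus R_NormedModule); [apply (@is_RInt_plus R_NormedModule)|].
    - exact (is_RInt_wallis_cos (S n)).
    - apply (@is_RInt_scal R_NormedModule). exact (is_RInt_wallis_sqr (S n)).
    - apply (@is_RInt_scal R_NormedModule). exact (is_RInt_wallis_sqr n). }
  pose proof (is_RInt_unique _ _ _ _ Hder) as E1.
  pose proof (is_RInt_unique _ _ _ _ Hcomb) as E2.
  cbv beta in E1. rewrite cos_PI2, sin_0, !pow_i in E1 by lia. lra.
Qed.

Lemma wallis_cos_0 : wallis_cos 0 = PI / 2.
Proof.
  unfold wallis_cos. simpl. rewrite RInt_const. unfold scal; simpl. unfold mult; simpl. ring.
Qed.

Lemma wallis_sqr_0 : wallis_sqr 0 = PI ^ 3 / 24.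
Proof.
  unfold wallis_sqr. apply is_RInt_unique.
  replace (PI ^ 3 / 24) with ((PI / 2) ^ 3 / 3 - 0 ^ 3 / 3) by field.
  apply (is_RInt_derive_everywhere (fun x => x ^ 3 / 3)).
  - intros x. auto_derive; [trivial|]. simpl. field.
  - intros x. auto_derive. trivial.
Qed.

Lemma wallis_cos_pos n : 0 < wallis_cos n.
Proof.
  induction n as [|n IH].
  - rewrite wallis_cos_0. pose proof PI_RGT_0. lra.
  - pose proof (wallis_cos_S n). pose proof (pos_INR n). nra.
Qed.

Lemma wallis_sqr_ge0 n : 0 <= wallis_sqr n.
Proof.
  apply (is_RInt_ge_0 (fun x => x ^ 2 * cos x ^ (2 * n)) 0 (PI / 2));
    [pose proof PI_RGT_0; lra | apply is_RInt_wallis_sqr |].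
  intros x _. rewrite pow_mult. apply Rmult_le_pos; [apply pow2_ge_0 | apply pow_le, pow2_ge_0].
Qed.

(* From sin x >= x - x^3/6 and x <= PI/2 < 2. *)
Lemma x_le_3_sin x : 0 <= x <= PI / 2 -> x <= 3 * sin x.
Proof.
  intros Hx. pose proof PI_4.
  destruct (sin_bound x 0 ltac:(lra) ltac:(lra)) as [Hsin _].
  unfold sin_approx, sin_term in Hsin. simpl in Hsin. nra.
Qed.

Lemma wallis_sqr_le n : wallis_sqr n <= 9 * wallis_cos n / (2 * INR n + 2).
Proof.
  assert (Hle : wallis_sqr n <= 9 * (wallis_cos n - wallis_cos (S n))).
  { apply (is_RInt_le (fun x => x ^ 2 * cos x ^ (2 * n))
             (fun x => 9 * (cos x ^ (2 * n) - cos x ^ (2 * S n))) 0 (PI / 2));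
      [pose proof PI_RGT_0; lra | apply is_RInt_wallis_sqr | |].
    - apply (@is_RInt_scal R_NormedModule), (@is_RInt_minus R_NormedModule);
        apply is_RInt_wallis_cos.
    - intros x Hx. pose proof (x_le_3_sin x ltac:(lra)).
      replace (2 * S n)%nat with (2 * n + 2)%nat by lia. rewrite pow_add.
      assert (HK : 0 <= cos x ^ (2 * n)) by (rewrite pow_mult; apply pow_le, pow2_ge_0).
      assert (Hx2 : x ^ 2 <= 9 * (1 - cos x ^ 2)) by (pose proof (sin2_cos2_pow x); nra).
      replace (9 * (cos x ^ (2 * n) - cos x ^ (2 * n) * cos x ^ 2))
        with (9 * (1 - cos x ^ 2) * cos x ^ (2 * n)) by ring.
      apply Rmult_le_compat_r; assumption. }
  pose proof (wallis_cos_S n). pose proof (pos_INR n).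
  apply Rle_div_r; nra.
Qed.

Lemma sum_inv_sqr_wallis n :
  sum_f_R0 (fun k => / INR k ^ 2) n = PI ^ 2 / 6 - 2 * wallis_sqr n / wallis_cos n.
Proof.
  induction n as [|n IH].
  - simpl sum_f_R0. rewrite wallis_cos_0, wallis_sqr_0. simpl. rewrite Rmult_0_l, Rinv_0.
    field. apply PI_neq0.
  - rewrite tech5, IH, S_INR.
    pose proof (wallis_cos_pos n). pose proof (wallis_cos_pos (S n)). pose proof (pos_INR n).
    pose proof (wallis_cos_S n) as HA. pose proof (wallis_sqr_S n) as HB.
    assert (EA : wallis_cos (S n) = (2 * INR n + 1) * wallis_cos n / (2 * INR n + 2))
      by (rewrite <- HA; field; lra).
    assert (EB : wallis_sqr (S n)
                 = ((INR n + 1) * (2 * INR n + 1) * wallis_sqr n - wallis_cos (S n))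
                   / ((INR n + 1) * (2 * INR n + 2))) by (rewrite HB; field; lra).
    rewrite EB, EA. field. lra.
Qed.

Theorem is_series_inv_sqr : is_series (fun k => / INR k ^ 2) (PI ^ 2 / 6).
Proof.
  apply is_series_of_partial_sums.
  apply (is_lim_seq_ext (fun n => PI ^ 2 / 6 - 2 * wallis_sqr n / wallis_cos n));
    [intros n; symmetry; apply sum_inv_sqr_wallis|].
  assert (Hlim : is_lim_seq (fun n => 2 * wallis_sqr n / wallis_cos n) 0).
  { apply (is_lim_seq_le_le (fun _ => 0) _ (fun n => 9 * / (INR n + 1))).
    - intros n. pose proof (wallis_cos_pos n). pose proof (wallis_sqr_ge0 n).
      pose proof (wallis_sqr_le n). pose proof (pos_INR n). split.
      + apply Rdiv_le_0_compat; lra.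
      + apply Rle_div_l; [lra|].
        replace (9 * / (INR n + 1) * wallis_cos n)
          with (2 * (9 * wallis_cos n / (2 * INR n + 2))) by (field; lra).
        lra.
    - apply is_lim_seq_const.
    - pose proof (is_lim_seq_mult' _ _ _ _ (is_lim_seq_const 9) is_lim_seq_inv_INR_S) as H.
      now rewrite Rmult_0_r in H. }
  pose proof (is_lim_seq_minus' _ _ _ _ (is_lim_seq_const (PI ^ 2 / 6)) Hlim) as H.
  now rewrite Rminus_0_r in H.
Qed.

Lemma inv_INR_range n : 0 <= / INR n <= 1.
Proof.
  destruct n as [|n]; [simpl; rewrite Rinv_0; lra|].
  rewrite S_INR. pose proof (inv_INR_S_range n). lra.
Qed.

Lemma CV_radius_inv_INR : Rbar_le 1 (CV_radius (fun n => / INR n)).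
Proof. apply CV_radius_ge_1_unit_interval, inv_INR_range. Qed.

Lemma PSeries_inv_INR t : 0 <= t < 1 -> PSeries (fun n => / INR n) t = - ln (1 - t).
Proof.
  intros Ht.
  apply (eq_of_is_derive (PSeries (fun n => / INR n)) (fun s => - ln (1 - s))
           (PSeries (PS_derive (fun n => / INR n))) (fun s => / (1 - s)));
    [lra | rewrite PSeries_0, Rminus_0_r, ln_1; simpl; rewrite Rinv_0; ring | | |].
  - intros s Hs. apply is_derive_PSeries, Rabs_lt_CV_radius, Rabs_lt_1;
      [apply CV_radius_inv_INR | lra].
  - intros s Hs. auto_derive; [lra | field; lra].
  - intros s Hs. rewrite <- PSeries_one by (apply Rabs_lt_1; lra).
    apply PSeries_ext. intros n. unfold PS_derive. field. apply not_0_INR. lia.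
Qed.

(* In Rocq / 0 = 0, so here and below coefficient sequences such as / INR n ^ 2 or
   cb n / INR n vanish at n = 0. *)
Definition Li2 (t : R) : R := PSeries (fun n => / INR n ^ 2) t.

Lemma inv_sqr_range n : 0 <= / INR n ^ 2 <= 1.
Proof.
  rewrite <- pow_inv. destruct (inv_INR_range n). split; [apply pow_le; lra | simpl; nra].
Qed.

Lemma is_derive_Li2 t : 0 <= t < 1 -> is_derive Li2 t (PSeries (fun n => / INR (S n)) t).
Proof.
  intros Ht. rewrite <- (PSeries_ext (PS_derive (fun n => / INR n ^ 2))).
  - apply is_derive_PSeries, Rabs_lt_CV_radius, Rabs_lt_1;
      [apply CV_radius_ge_1_unit_interval, inv_sqr_range | exact Ht].
  - intros n. unfold PS_derive. field. apply not_0_INR. lia.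
Qed.

Lemma mul_PSeries_inv_INR_S t :
  0 <= t < 1 -> t * PSeries (fun n => / INR (S n)) t = - ln (1 - t).
Proof.
  intros Ht. rewrite (PSeries_decr_1_disc (fun n => / INR n)), PSeries_inv_INR
    by (auto using CV_radius_inv_INR, Rabs_lt_1).
  simpl. rewrite Rinv_0. ring.
Qed.

Lemma PSeries_inv_INR_S_0 : PSeries (fun n => / INR (S n)) 0 = 1.
Proof. rewrite PSeries_0. simpl. apply Rinv_1. Qed.

Lemma is_derive_Li2_sqr t :
  0 <= t < 1 -> is_derive (fun t => Li2 (t ^ 2)) t (2 * t * PSeries (fun n => / INR (S n)) (t ^ 2)).
Proof.
  intros Ht. apply (is_derive_comp Li2 (fun t => t ^ 2)).
  - apply is_derive_Li2. split; [apply pow2_ge_0 | simpl; nra].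
  - auto_derive; [trivial | ring].
Qed.

Lemma ln_1_minus_sqr t : 0 <= t < 1 -> ln (1 - t ^ 2) = ln (1 - t) + ln (1 + t).
Proof. intros Ht. rewrite <- ln_mult by lra. f_equal. ring. Qed.

Lemma is_lim_seq_Li2 (x : nat -> R) :
  (forall m, 0 <= x m < 1) -> is_lim_seq x 1 -> is_lim_seq (fun m => Li2 (x m)) (PI ^ 2 / 6).
Proof.
  intros Hx Hlim. apply abel_nonneg; auto using is_series_inv_sqr.
  intros n. apply inv_sqr_range.
Qed.

Definition cb (n : nat) : R := central_binom n / 2 ^ (2 * n).

Lemma cb_0 : cb 0 = 1.
Proof. unfold cb, central_binom, Binomial.C. simpl. field. Qed.

Lemma cb_S n : cb (S n) = cb n * (2 * INR n + 1) / (2 * INR n + 2).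
Proof.
  unfold cb, central_binom, Binomial.C.
  replace (2 * S n - S n)%nat with (S n) by lia.
  replace (2 * n - n)%nat with n by lia.
  replace (2 * S n)%nat with (S (S (2 * n))) by lia.
  rewrite !fact_simpl, !mult_INR, !S_INR, mult_INR. simpl INR.
  pose proof (INR_fact_lt_0 n). pose proof (INR_fact_lt_0 (2 * n)). pose proof (pos_INR n).
  simpl pow. field. repeat split; try lra. apply pow_nonzero. lra.
Qed.

Lemma cb_1 : cb 1 = / 2.
Proof. rewrite cb_S, cb_0. simpl. field. Qed.

Lemma cb_pos n : 0 < cb n.
Proof.
  induction n as [|n IH]; [rewrite cb_0; lra|].
  rewrite cb_S. pose proof (pos_INR n). apply Rdiv_lt_0_compat; nra.
Qed.

Lemma cb_S_le n : cb (S n) <= cb n.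
Proof.
  rewrite cb_S. pose proof (cb_pos n). pose proof (pos_INR n).
  apply Rle_div_l; nra.
Qed.

Lemma cb_antitone m n : (m <= n)%nat -> cb n <= cb m.
Proof.
  induction 1 as [|n _ IH]; [lra|]. pose proof (cb_S_le n). lra.
Qed.

Lemma cb_le_1 n : cb n <= 1.
Proof. rewrite <- cb_0. apply cb_antitone. lia. Qed.

Lemma cb_range n : 0 <= cb n <= 1.
Proof. pose proof (cb_pos n). pose proof (cb_le_1 n). lra. Qed.

Lemma INR_mul_cb_sqr_monotone m n : (m <= n)%nat -> INR m * cb m ^ 2 <= INR n * cb n ^ 2.
Proof.
  induction 1 as [|n _ IH]; [lra|].
  enough (INR n * cb n ^ 2 <= INR (S n) * cb (S n) ^ 2) by lra.
  rewrite cb_S, S_INR. pose proof (pos_INR n). pose proof (cb_pos n).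
  replace ((INR n + 1) * (cb n * (2 * INR n + 1) / (2 * INR n + 2)) ^ 2)
    with (INR n * cb n ^ 2 + cb n ^ 2 / (4 * (INR n + 1))) by (field; lra).
  assert (0 <= cb n ^ 2 / (4 * (INR n + 1))) by (apply Rdiv_le_0_compat; nra).
  lra.
Qed.

Lemma cb_le_double m : cb m <= 2 * cb (2 * m).
Proof.
  destruct m as [|m]; [simpl; pose proof (cb_pos 0); lra|].
  pose proof (INR_mul_cb_sqr_monotone (S m) (2 * S m) ltac:(lia)) as H.
  rewrite mult_INR in H. simpl (INR 2) in H.
  pose proof (cb_pos (S m)). pose proof (cb_pos (2 * S m)). pose proof (lt_0_INR (S m) ltac:(lia)).
  assert (Hsq : cb (S m) ^ 2 <= 2 * cb (2 * S m) ^ 2).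
  { apply (Rmult_le_reg_l (INR (S m))); lra. }
  apply Rsqr_incr_0_var; [unfold Rsqr; nra | lra].
Qed.

Lemma harmonic_S n : harmonic (S n) = harmonic n + / (INR n + 1).
Proof. now rewrite <- S_INR. Qed.

Lemma harmonic_range n : 0 <= harmonic n <= INR n.
Proof.
  induction n as [|n IH]; [simpl; lra|].
  rewrite harmonic_S, S_INR. pose proof (inv_INR_S_range n). lra.
Qed.

Lemma harmonic_monotone m n : (m <= n)%nat -> harmonic m <= harmonic n.
Proof.
  induction 1 as [|n _ IH]; [lra|].
  rewrite harmonic_S. pose proof (inv_INR_S_range n). lra.
Qed.

Definition zsub (t : R) : R := 4 * t / (1 + t) ^ 2.

Lemma zsub_0 : zsub 0 = 0.
Proof. unfold zsub. field. Qed.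

Lemma zsub_range t : 0 <= t < 1 -> 0 <= zsub t < 1.
Proof.
  intros Ht. unfold zsub. assert (0 < (1 + t) ^ 2) by (apply pow_lt; lra). split.
  - apply Rdiv_le_0_compat; lra.
  - apply Rlt_div_l; [lra|]. simpl. nra.
Qed.

Lemma Rabs_zsub_lt_1 t : 0 <= t < 1 -> Rabs (zsub t) < 1.
Proof. intros Ht. apply Rabs_lt_1, zsub_range, Ht. Qed.

Lemma is_derive_PSeries_zsub (a : nat -> R) t :
  Rbar_le 1 (CV_radius a) -> 0 <= t < 1 ->
  is_derive (fun t => PSeries a (zsub t)) t
    (4 * (1 - t) / (1 + t) ^ 3 * PSeries (PS_derive a) (zsub t)).
Proof.
  intros Ha Ht.
  apply (is_derive_comp (PSeries a) zsub).
  - apply is_derive_PSeries, Rabs_lt_CV_radius, Rabs_zsub_lt_1; assumption.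
  - unfold zsub. auto_derive; [nra|]. field. lra.
Qed.

Lemma is_derive_PSeries_div_INR_zsub (a : nat -> R) t :
  Rbar_le 1 (CV_radius a) -> 0 <= t < 1 ->
  is_derive (fun t => PSeries (fun n => a n / INR n) (zsub t)) t
    (4 * (1 - t) / (1 + t) ^ 3 * PSeries (fun n => a (S n)) (zsub t)).
Proof.
  intros Ha Ht. rewrite <- (PSeries_ext _ _ (zsub t) (PS_derive_div_INR a)).
  apply is_derive_PSeries_zsub; [now rewrite CV_radius_div_INR | exact Ht].
Qed.

Lemma is_derive_PSeries_zsub_first_order (a b : nat -> R) t :
  Rbar_le 1 (CV_radius a) -> Rbar_le 1 (CV_radius b) -> 0 <= t < 1 ->
  (forall n, 2 * PS_derive a n = (2 * INR n + 1) * a n + b n) ->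
  is_derive (fun t => PSeries a (zsub t) * ((1 - t) / (1 + t))) t
    (2 * PSeries b (zsub t) / (1 + t) ^ 2).
Proof.
  intros Ha Hb Ht Hab.
  pose proof (PSeries_derive_first_order a b (zsub t) Ha Hb (Rabs_zsub_lt_1 t Ht) Hab) as Hode.
  assert (Hr : is_derive (fun t => (1 - t) / (1 + t)) t (-2 / (1 + t) ^ 2))
    by (auto_derive; [lra | field; lra]).
  pose proof (is_derive_mult _ _ t _ _ (is_derive_PSeries_zsub a t Ha Ht) Hr Rmult_comm) as H.
  destruct (zsub_range t Ht) as [_ Hz1].
  replace (2 * PSeries b (zsub t) / (1 + t) ^ 2) with
    (4 * (1 - t) / (1 + t) ^ 3 * PSeries (PS_derive a) (zsub t) * ((1 - t) / (1 + t))
     + PSeries a (zsub t) * (-2 / (1 + t) ^ 2)); [exact H|].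
  replace (PSeries (PS_derive a) (zsub t))
    with ((PSeries a (zsub t) + PSeries b (zsub t)) / (2 * (1 - zsub t)))
    by (rewrite <- Hode; field; lra).
  unfold zsub. field. split; [lra | nra].
Qed.

Lemma CV_radius_cb : Rbar_le 1 (CV_radius cb).
Proof. apply CV_radius_ge_1_unit_interval, cb_range. Qed.

Lemma CV_radius_cb_S : Rbar_le 1 (CV_radius (fun n => cb (S n))).
Proof. apply CV_radius_ge_1_unit_interval. intros n. apply cb_range. Qed.

Lemma cb_harmonic_div_range n : 0 <= cb n * harmonic n / INR n <= 1.
Proof.
  pose proof (cb_pos n). pose proof (cb_le_1 n). destruct (harmonic_range n).
  destruct n as [|n]; [simpl; rewrite Rdiv_0_r; lra|].
  pose proof (lt_0_INR (S n) ltac:(lia)). split.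
  - apply Rdiv_le_0_compat; nra.
  - apply Rle_div_l; nra.
Qed.

Lemma CV_radius_cb_harmonic : Rbar_le 1 (CV_radius (fun n => cb n * harmonic n)).
Proof.
  rewrite (CV_radius_ext _ (fun n => INR n * (cb n * harmonic n / INR n))).
  - rewrite CV_radius_mul_INR. apply CV_radius_ge_1_unit_interval, cb_harmonic_div_range.
  - intros [|n]; [simpl; ring|]. field. apply not_0_INR. lia.
Qed.

Lemma PSeries_cb_zsub t : 0 <= t < 1 -> PSeries cb (zsub t) = (1 + t) / (1 - t).
Proof.
  intros Ht.
  assert (H : PSeries cb (zsub t) * ((1 - t) / (1 + t)) = 1).
  { apply (eq_of_is_derive (fun s => PSeries cb (zsub s) * ((1 - s) / (1 + s))) (fun _ => 1)
             (fun s => 2 * PSeries (fun _ => 0) (zsub s) / (1 + s) ^ 2) (fun _ => 0));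
      [lra | rewrite zsub_0, PSeries_0, cb_0; field | | |].
    - intros s Hs. apply is_derive_PSeries_zsub_first_order;
        [apply CV_radius_cb | apply (CV_radius_ge_1_unit_interval _); intros; lra | lra |].
      intros n. unfold PS_derive. rewrite cb_S, S_INR. field. pose proof (pos_INR n). lra.
    - intros s _. auto_derive; trivial.
    - intros s Hs. rewrite PSeries_const_0. field. lra. }
  apply (Rmult_eq_reg_r ((1 - t) / (1 + t))); [rewrite H; field; lra |].
  apply Rgt_not_eq, Rdiv_lt_0_compat; lra.
Qed.

Lemma PSeries_cb_S_zsub t :
  0 <= t < 1 -> PSeries (fun n => cb (S n)) (zsub t) = (1 + t) ^ 2 / (2 * (1 - t)).
Proof.
  intros Ht. destruct (Req_dec t 0) as [->|Ht0].
  - rewrite zsub_0, PSeries_0, cb_1. field.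
  - apply (Rmult_eq_reg_l (zsub t)); [|unfold zsub; apply Rgt_not_eq, Rdiv_lt_0_compat; nra].
    rewrite PSeries_decr_1_disc by (apply CV_radius_cb || apply Rabs_zsub_lt_1; lra).
    rewrite PSeries_cb_zsub, cb_0 by lra. unfold zsub. field. lra.
Qed.

Lemma PSeries_cb_harmonic_zsub t : 0 <= t < 1 ->
  PSeries (fun n => cb n * harmonic n) (zsub t) = - 2 * ln (1 - t) * (1 + t) / (1 - t).
Proof.
  intros Ht.
  assert (H : PSeries (fun n => cb n * harmonic n) (zsub t) * ((1 - t) / (1 + t))
              = - 2 * ln (1 - t)).
  { apply (eq_of_is_derive
             (fun s => PSeries (fun n => cb n * harmonic n) (zsub s) * ((1 - s) / (1 + s)))
             (fun s => - 2 * ln (1 - s))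
             (fun s => 2 * PSeries (fun n => 2 * cb (S n)) (zsub s) / (1 + s) ^ 2)
             (fun s => 2 / (1 - s)));
      [lra | rewrite zsub_0, PSeries_0, Rminus_0_r, ln_1; simpl; ring | | |].
    - intros s Hs. apply is_derive_PSeries_zsub_first_order;
        [apply CV_radius_cb_harmonic | apply CV_radius_ge_1_scal, CV_radius_cb_S | lra |].
      intros n. unfold PS_derive. rewrite cb_S, harmonic_S, S_INR.
      field. pose proof (pos_INR n). lra.
    - intros s Hs. auto_derive; [lra | field; lra].
    - intros s Hs. change (fun n => 2 * cb (S n)) with (PS_scal 2 (fun n => cb (S n))).
      rewrite PSeries_scal, PSeries_cb_S_zsub by lra. field. lra. }
  apply (Rmult_eq_reg_r ((1 - t) / (1 + t))); [rewrite H; field; lra |].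
  apply Rgt_not_eq, Rdiv_lt_0_compat; lra.
Qed.

Lemma PSeries_cb_div_zsub t :
  0 <= t < 1 -> PSeries (fun n => cb n / INR n) (zsub t) = 2 * ln (1 + t).
Proof.
  intros Ht.
  apply (eq_of_is_derive (fun s => PSeries (fun n => cb n / INR n) (zsub s))
           (fun s => 2 * ln (1 + s))
           (fun s => 4 * (1 - s) / (1 + s) ^ 3 * PSeries (fun n => cb (S n)) (zsub s))
           (fun s => 2 / (1 + s)));
    [lra | rewrite zsub_0, PSeries_0, Rplus_0_r, ln_1; simpl; rewrite Rdiv_0_r; ring | | |].
  - intros s Hs. apply is_derive_PSeries_div_INR_zsub; [apply CV_radius_cb | lra].
  - intros s Hs. auto_derive; [lra | field; lra].
  - intros s Hs. rewrite PSeries_cb_S_zsub by lra. field. lra.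
Qed.

Lemma PSeries_cb_harmonic_div_zsub t :
  0 <= t < 1 -> PSeries (fun n => cb n * harmonic n / INR n) (zsub t) = 2 * Li2 t.
Proof.
  intros Ht.
  apply (eq_of_is_derive (fun s => PSeries (fun n => cb n * harmonic n / INR n) (zsub s))
           (fun s => 2 * Li2 s)
           (fun s => 4 * (1 - s) / (1 + s) ^ 3
                     * PSeries (fun n => cb (S n) * harmonic (S n)) (zsub s))
           (fun s => 2 * PSeries (fun n => / INR (S n)) s));
    [lra | | | |].
  - unfold Li2. rewrite zsub_0, !PSeries_0. simpl. rewrite Rmult_0_l, Rinv_0. unfold Rdiv. ring.
  - intros s Hs. apply is_derive_PSeries_div_INR_zsub; [apply CV_radius_cb_harmonic | lra].
  - intros s Hs. apply is_derive_scal, is_derive_Li2. lra.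
  - intros s Hs. assert (Hs1 : 0 <= s < 1) by lra.
    destruct (Req_dec s 0) as [->|Hs0].
    + rewrite zsub_0, PSeries_0, PSeries_inv_INR_S_0, cb_1. simpl. field.
    + assert (Hz : 0 < zsub s) by (unfold zsub; apply Rdiv_lt_0_compat; nra).
      assert (EE : PSeries (fun n => cb (S n) * harmonic (S n)) (zsub s)
                   = - 2 * ln (1 - s) * (1 + s) / (1 - s) / zsub s).
      { apply (Rmult_eq_reg_l (zsub s)); [|lra].
        rewrite (PSeries_decr_1_disc (fun n => cb n * harmonic n)), PSeries_cb_harmonic_zsub
          by auto using CV_radius_cb_harmonic, Rabs_zsub_lt_1.
        simpl. field. lra. }
      assert (EK : PSeries (fun n => / INR (S n)) s = - ln (1 - s) / s).
      { apply (Rmult_eq_reg_l s); [|lra]. rewrite mul_PSeries_inv_INR_S by lra. field. lra. }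
      rewrite EE, EK. unfold zsub. field. split; lra.
Qed.

Lemma PSeries_cb_div_sqr_zsub t : 0 <= t < 1 ->
  PSeries (fun n => cb n / INR n ^ 2) (zsub t) = 2 * Li2 t - Li2 (t ^ 2) - 2 * ln (1 + t) ^ 2.
Proof.
  intros Ht.
  rewrite (PSeries_ext _ (fun n => cb n / INR n / INR n))
    by (intros n; unfold Rdiv; rewrite Rmult_assoc, <- Rinv_mult; simpl; now rewrite Rmult_1_r).
  apply (eq_of_is_derive (fun s => PSeries (fun n => cb n / INR n / INR n) (zsub s))
           (fun s => 2 * Li2 s - Li2 (s ^ 2) - 2 * ln (1 + s) ^ 2)
           (fun s => 4 * (1 - s) / (1 + s) ^ 3 * PSeries (fun n => cb (S n) / INR (S n)) (zsub s))
           (fun s => 2 * PSeries (fun n => / INR (S n)) s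
                     - 2 * s * PSeries (fun n => / INR (S n)) (s ^ 2)
                     - 2 * (2 * ln (1 + s) / (1 + s))));
    [lra | | | |].
  - unfold Li2. rewrite zsub_0, pow_i, !PSeries_0 by lia. simpl.
    rewrite Rplus_0_r, ln_1, !Rmult_0_l. unfold Rdiv. rewrite Rinv_0. ring.
  - intros s Hs. apply is_derive_PSeries_div_INR_zsub; [|lra].
    rewrite CV_radius_div_INR. apply CV_radius_cb.
  - intros s Hs.
    apply (is_derive_minus (fun s => 2 * Li2 s - Li2 (s ^ 2)) (fun s => 2 * ln (1 + s) ^ 2)).
    + apply (is_derive_minus (fun s => 2 * Li2 s) (fun s => Li2 (s ^ 2)));
        [apply is_derive_scal, is_derive_Li2 | apply is_derive_Li2_sqr]; lra.
    + apply is_derive_scal. auto_derive; [lra | field; lra].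
  - intros s Hs. assert (Hs1 : 0 <= s < 1) by lra.
    destruct (Req_dec s 0) as [->|Hs0].
    + rewrite zsub_0, PSeries_0, pow_i, PSeries_inv_INR_S_0, cb_1, Rplus_0_r, ln_1 by lia.
      simpl. field.
    + assert (Hz : 0 < zsub s) by (unfold zsub; apply Rdiv_lt_0_compat; nra).
      assert (EG : PSeries (fun n => cb (S n) / INR (S n)) (zsub s) = 2 * ln (1 + s) / zsub s).
      { apply (Rmult_eq_reg_l (zsub s)); [|lra].
        rewrite (PSeries_decr_1_disc (fun n => cb n / INR n)), PSeries_cb_div_zsub
          by (auto using Rabs_zsub_lt_1; rewrite CV_radius_div_INR; apply CV_radius_cb).
        simpl. rewrite Rdiv_0_r. field. lra. }
      assert (EK1 : PSeries (fun n => / INR (S n)) s = - ln (1 - s) / s).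
      { apply (Rmult_eq_reg_l s); [|lra]. rewrite mul_PSeries_inv_INR_S by lra. field. lra. }
      assert (EK2 : PSeries (fun n => / INR (S n)) (s ^ 2) = - ln (1 - s ^ 2) / s ^ 2).
      { apply (Rmult_eq_reg_l (s ^ 2)); [|apply pow_nonzero; lra].
        rewrite mul_PSeries_inv_INR_S by (split; [apply pow2_ge_0 | simpl; nra]).
        field. lra. }
      rewrite EG, EK1, EK2, ln_1_minus_sqr by lra. unfold zsub. field. split; lra.
Qed.

Definition seq_to_1 (m : nat) : R := 1 - / (INR m + 2).

Lemma seq_to_1_range m : 0 <= seq_to_1 m < 1.
Proof.
  unfold seq_to_1. pose proof (inv_INR_S_range (S m)). rewrite S_INR in H.
  replace (INR m + 1 + 1) with (INR m + 2) in H by ring. lra.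
Qed.

Lemma is_lim_seq_seq_to_1 : is_lim_seq seq_to_1 1.
Proof.
  pose proof is_lim_seq_inv_INR_S as H. apply (is_lim_seq_incr_1 _ 0) in H.
  pose proof (is_lim_seq_minus' (fun _ => 1) _ 1 0 (is_lim_seq_const 1) H) as H1.
  rewrite Rminus_0_r in H1. apply (is_lim_seq_ext _ seq_to_1) in H1; [exact H1|].
  intros m. unfold seq_to_1. rewrite S_INR. now replace (INR m + 1 + 1) with (INR m + 2) by ring.
Qed.

Lemma is_lim_seq_comp_seq_to_1 (f : R -> R) :
  ex_derive f 1 -> is_lim_seq (fun m => f (seq_to_1 m)) (f 1).
Proof.
  intros Hf. apply is_lim_seq_continuous; [|apply is_lim_seq_seq_to_1].
  apply continuity_pt_filterlim, (@ex_derive_continuous R_AbsRing R_NormedModule), Hf.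
Qed.

Lemma is_series_of_zsub (a : nat -> R) (F : R -> R) (L : R) :
  (forall n, 0 <= a n <= 1) ->
  (forall t, 0 <= t < 1 -> PSeries a (zsub t) = F t) ->
  is_lim_seq (fun m => F (seq_to_1 m)) L -> is_series a L.
Proof.
  intros Ha HF HL.
  assert (Hx : forall m, 0 <= zsub (seq_to_1 m) < 1)
    by (intros m; apply zsub_range, seq_to_1_range).
  apply (tauber_nonneg a (fun m => zsub (seq_to_1 m))).
  - intros n. apply Ha.
  - exact Hx.
  - replace 1 with (zsub 1) by (unfold zsub; field).
    apply is_lim_seq_comp_seq_to_1. unfold zsub. auto_derive. lra.
  - intros m. apply ex_series_disc; [apply CV_radius_ge_1_unit_interval, Ha | apply Rabs_lt_1, Hx].
  - apply (is_lim_seq_ext (fun m => F (seq_to_1 m))); [|exact HL].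
    intros m. symmetry. apply HF, seq_to_1_range.
Qed.

Lemma is_lim_seq_ln_1_plus_seq_to_1 : is_lim_seq (fun m => ln (1 + seq_to_1 m)) (ln 2).
Proof.
  replace 2 with (1 + 1) by ring.
  apply (is_lim_seq_comp_seq_to_1 (fun t => ln (1 + t))). auto_derive. lra.
Qed.

Lemma is_series_cb_div : is_series (fun n => cb n / INR n) (2 * ln 2).
Proof.
  apply (is_series_of_zsub _ (fun t => 2 * ln (1 + t))).
  - intros n. destruct (cb_range n), (inv_INR_range n). unfold Rdiv. split; nra.
  - exact PSeries_cb_div_zsub.
  - apply is_lim_seq_mult'; [apply is_lim_seq_const | apply is_lim_seq_ln_1_plus_seq_to_1].
Qed.

Lemma is_series_cb_div_sqr :
  is_series (fun n => cb n / INR n ^ 2) (PI ^ 2 / 6 - 2 * ln 2 ^ 2).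
Proof.
  apply (is_series_of_zsub _ (fun t => 2 * Li2 t - Li2 (t ^ 2) - 2 * ln (1 + t) ^ 2)).
  - intros n. destruct (cb_range n), (inv_sqr_range n). unfold Rdiv. split; nra.
  - exact PSeries_cb_div_sqr_zsub.
  - replace (PI ^ 2 / 6 - 2 * ln 2 ^ 2)
      with (2 * (PI ^ 2 / 6) - PI ^ 2 / 6 - 2 * (ln 2 * (ln 2 * 1))) by ring.
    apply is_lim_seq_minus'; [apply is_lim_seq_minus'|].
    + apply is_lim_seq_mult'; [apply is_lim_seq_const|].
      apply is_lim_seq_Li2; [apply seq_to_1_range | apply is_lim_seq_seq_to_1].
    + apply is_lim_seq_Li2; [|apply is_lim_seq_pow, is_lim_seq_seq_to_1].
      intros m. destruct (seq_to_1_range m). split; [apply pow2_ge_0 | simpl; nra].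
    + apply is_lim_seq_mult'; [apply is_lim_seq_const|].
      apply is_lim_seq_mult'; [apply is_lim_seq_ln_1_plus_seq_to_1|].
      apply is_lim_seq_mult'; [apply is_lim_seq_ln_1_plus_seq_to_1 | apply is_lim_seq_const].
Qed.

Lemma is_series_cb_harmonic_div :
  is_series (fun n => cb n * harmonic n / INR n) (PI ^ 2 / 3).
Proof.
  apply (is_series_of_zsub _ (fun t => 2 * Li2 t)).
  - exact cb_harmonic_div_range.
  - exact PSeries_cb_harmonic_div_zsub.
  - replace (PI ^ 2 / 3) with (2 * (PI ^ 2 / 6)) by field.
    apply is_lim_seq_mult'; [apply is_lim_seq_const|].
    apply is_lim_seq_Li2; [apply seq_to_1_range | apply is_lim_seq_seq_to_1].
Qed.

Lemma cb_harmonic_div_ge m k : (m < k <= 2 * m)%nat ->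
  cb (2 * m) * harmonic m / INR (2 * m) <= cb k * harmonic k / INR k.
Proof.
  intros Hk. pose proof (lt_0_INR k ltac:(lia)).
  pose proof (cb_pos (2 * m)). destruct (harmonic_range m).
  unfold Rdiv. apply Rmult_le_compat.
  - apply Rmult_le_pos; lra.
  - left. apply Rinv_0_lt_compat, lt_0_INR. lia.
  - apply Rmult_le_compat; [lra | lra | apply cb_antitone; lia | apply harmonic_monotone; lia].
  - apply Rinv_le_contravar; [lra | apply le_INR; lia].
Qed.

(* The m terms with index in (m, 2m] are each at least cb (2m) H_m / (2m), and
   cb m <= 2 cb (2m). *)
Lemma cb_harmonic_le_tail m :
  cb m * harmonic m <= 4 * (sum_f_R0 (fun n => cb n * harmonic n / INR n) (2 * m)
                            - sum_f_R0 (fun n => cb n * harmonic n / INR n) m).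
Proof.
  set (q n := cb n * harmonic n / INR n).
  assert (Hpart : forall j, (j <= m)%nat ->
            INR j * (cb (2 * m) * harmonic m / INR (2 * m)) <= sum_f_R0 q (m + j) - sum_f_R0 q m).
  { induction j as [|j IH]; intros Hj.
    - rewrite Nat.add_0_r. simpl. lra.
    - rewrite Nat.add_succ_r, tech5, S_INR.
      pose proof (cb_harmonic_div_ge m (S (m + j)) ltac:(lia)). unfold q at 2.
      specialize (IH ltac:(lia)). lra. }
  destruct m as [|m]; [simpl; rewrite Rmult_0_r; unfold Rminus; lra|].
  specialize (Hpart (S m) (le_n _)). replace (S m + S m)%nat with (2 * S m)%nat in Hpart by lia.
  rewrite mult_INR in Hpart. simpl (INR 2) in Hpart.
  pose proof (lt_0_INR (S m) ltac:(lia)). pose proof (cb_le_double (S m)).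
  destruct (harmonic_range (S m)).
  replace (INR (S m) * (cb (2 * S m) * harmonic (S m) / ((1 + 1) * INR (S m))))
    with (cb (2 * S m) * harmonic (S m) / 2) in Hpart by (field; lra).
  nra.
Qed.

Lemma is_lim_seq_cb_harmonic : is_lim_seq (fun n => cb n * harmonic n) 0.
Proof.
  set (q n := cb n * harmonic n / INR n).
  pose proof (is_lim_seq_partial_sums _ _ is_series_cb_harmonic_div) as Hq.
  assert (Hdouble : forall m, (2 * m < 2 * S m)%nat) by (intros; lia).
  assert (Hq2 := is_lim_seq_subseq _ _ _ (eventually_subseq _ Hdouble) Hq).
  pose proof (is_lim_seq_minus' _ _ _ _ Hq2 Hq) as Htail. rewrite Rminus_eq_0 in Htail.
  apply (is_lim_seq_le_le (fun _ => 0) _ (fun m => 4 * (sum_f_R0 q (2 * m) - sum_f_R0 q m))).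
  - intros m. split; [destruct (cb_range m), (harmonic_range m); nra | apply cb_harmonic_le_tail].
  - apply is_lim_seq_const.
  - pose proof (is_lim_seq_mult' _ _ _ _ (is_lim_seq_const 4) Htail) as H.
    now rewrite Rmult_0_r in H.
Qed.

Definition telescoping_part (n : nat) : R :=
  cb n * harmonic n * (2 * INR n + 1) * (2 * INR n + 3) / (INR n + 1) ^ 2.

Lemma term_eq n : term n = cb n * harmonic n / (INR n + 1) ^ 2.
Proof.
  unfold term, cb. pose proof (pos_INR n).
  field. split; [apply pow_nonzero | ]; lra.
Qed.

Lemma term_S_telescoping n :
  term (S n) = 2 * (cb (S n) / INR (S n) ^ 2) + -2 * (cb (S n) * harmonic (S n) / INR (S n))
               + 4 * (cb (S n) / INR (S n)) + (telescoping_part n - telescoping_part (S n)).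
Proof.
  rewrite term_eq. unfold telescoping_part.
  rewrite cb_S, harmonic_S, !S_INR. pose proof (pos_INR n). field. lra.
Qed.

Lemma is_lim_seq_telescoping_part : is_lim_seq telescoping_part 0.
Proof.
  apply (is_lim_seq_le_le (fun _ => 0) _ (fun n => 4 * (cb n * harmonic n))).
  - intros n. unfold telescoping_part. destruct (cb_range n), (harmonic_range n).
    pose proof (pos_INR n). assert (0 <= cb n * harmonic n) by nra. split.
    + apply Rdiv_le_0_compat; [|apply pow_lt; lra].
      apply Rmult_le_pos; [apply Rmult_le_pos|]; lra.
    + apply Rle_div_l; [apply pow_lt; lra|].
      replace (4 * (cb n * harmonic n) * (INR n + 1) ^ 2) with
        (cb n * harmonic n * (2 * INR n + 1) * (2 * INR n + 3) + cb n * harmonic n) by ring.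
      lra.
  - apply is_lim_seq_const.
  - pose proof (is_lim_seq_mult' _ _ _ _ (is_lim_seq_const 4) is_lim_seq_cb_harmonic) as H.
    now rewrite Rmult_0_r in H.
Qed.

Theorem mainTheorem4 :
  is_series (fun k : nat => term (S k))
    (- PI ^ 2 / 3 - 4 * (ln 2) ^ 2 + 8 * ln 2).
Proof.
  set (g n := 2 * (cb n / INR n ^ 2) + -2 * (cb n * harmonic n / INR n) + 4 * (cb n / INR n)).
  assert (Hg : is_series g (2 * (PI ^ 2 / 6 - 2 * ln 2 ^ 2) + -2 * (PI ^ 2 / 3) + 4 * (2 * ln 2))).
  { repeat apply is_series_plus_R; apply is_series_scal_R;
      auto using is_series_cb_div_sqr, is_series_cb_harmonic_div, is_series_cb_div. }
  assert (HgS : is_series (fun n => g (S n)) (- PI ^ 2 / 3 - 4 * (ln 2) ^ 2 + 8 * ln 2)).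
  { apply is_series_incr_1. replace (plus _ (g O)) with
      (2 * (PI ^ 2 / 6 - 2 * ln 2 ^ 2) + -2 * (PI ^ 2 / 3) + 4 * (2 * ln 2)); [exact Hg|].
    unfold g, plus; simpl. rewrite !Rmult_0_l, !Rdiv_0_r. field. }
  pose proof (is_series_telescope _ is_lim_seq_telescoping_part) as Htel.
  replace (telescoping_part 0) with 0 in Htel by (unfold telescoping_part; simpl; field).
  rewrite <- (Rplus_0_r (- PI ^ 2 / 3 - 4 * (ln 2) ^ 2 + 8 * ln 2)).
  apply (is_series_ext (fun n => g (S n) + (telescoping_part n - telescoping_part (S n)))).
  - intros n. symmetry. apply term_S_telescoping.
  - now apply is_series_plus_R.
Qed.
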